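(* Let $y\in\mathbb{R}^n$ and $X\in\mathbb{R}^{n\times p}$ with columns $x_1,\dots,x_p$ satisfying $\|x_j\|_2=1$ for all $j$, and let $\lambda>0$. Let $(\hat\beta_0,\hat\beta^+,\hat\beta^-,\hat\Theta)$ be a solution of the strong hierarchical lasso, respectively of the weak hierarchical lasso (both defined in the context, with the quadratic loss and no elastic net penalty). Let $\hat y=\hat\beta_0\mathbf{1}+X(\hat\beta^+-\hat\beta^-)+\frac12\sum_{j\neq k}\hat\Theta_{jk}(x_j*x_k)$ be the fitted values and define the partial residuals $$r^{(-j)}=y-\hat y+x_j(\hat\beta^+_j-\hat\beta^-_j),\qquad r^{(-jk)}=y-\hat y+(x_j*x_k)\,\frac{\hat\Theta_{jk}+\hat\Theta_{kj}}{2}.$$ Then: (Strong) for the strong hierarchical lasso there exist $\hat\alpha_1,\dots,\hat\alpha_p\ge 0$, with $\hat\alpha_j=0$ whenever $\|\hat\Theta_j\|_1<\hat\beta^+_j+\hat\beta^-_j$, such that for all $j$ and all $k\neq j$ $$\hat\beta^+_j-\hat\beta^-_j=\mathcal S\big(x_j^Tr^{(-j)},\lambda-\hat\alpha_j\big),\qquad \hat\Theta_{jk}=\frac{\mathcal S\big[(x_j*x_k)^Tr^{(-jk)},\ \lambda+\hat\alpha_j+\hat\alpha_k\big]}{\|x_j*x_k\|^2};$$ (Weak) for the weak hierarchical lasso there exist $\tilde\alpha_1,\dots,\tilde\alpha_p\ge 0$, with $\tilde\alpha_j=0$ whenever $\|\hat\Theta_j\|_1<\hat\beta^+_j+\hat\beta^-_j$,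 such that for all $j$ and all $k\ne j$ $$\hat\beta^+_j-\hat\beta^-_j=\mathcal S\big(x_j^Tr^{(-j)},\lambda-\tilde\alpha_j\big),\qquad \frac{\hat\Theta_{jk}+\hat\Theta_{kj}}{2}=\frac{\mathcal S\big[(x_j*x_k)^Tr^{(-jk)},\ \lambda+2\min\{\tilde\alpha_j,\tilde\alpha_k\}\big]}{\|x_j*x_k\|^2}.$$
   Context: $*$ denotes the elementwise product of vectors, $\mathbf 1\in\mathbb{R}^n$ the all-ones vector, and $\mathcal S(c,\lambda)=\mathrm{sign}(c)(|c|-\lambda)_+$ the soft-thresholding operator. For a matrix $\Theta\in\mathbb{R}^{p\times p}$, $\Theta_j$ denotes its $j$th row and $\|\Theta\|_1=\sum_{j\neq k}|\Theta_{jk}|$. Write $X_{i\cdot}$ for the $i$th row of $X$. The quadratic loss is $q(\beta_0,\beta,\Theta)=\frac12\sum_{i=1}^n\big(y_i-\beta_0-X_{i\cdot}\beta-\frac12X_{i\cdot}\Theta X_{i\cdot}^T\big)^2$. The strong hierarchical lasso is the problem: minimize over $\beta_0\in\mathbb{R}$, $\beta^+,\beta^-\in\mathbb{R}^p$, $\Theta\in\mathbb{R}^{p\times p}$ with $\Theta_{jj}=0$ for all $j$, the objective $q(\beta_0,\beta^+-\beta^-,\Theta)+\lambda\mathbf 1^T(\beta^++\beta^-)+\frac{\lambda}{2}\|\Theta\|_1$ subject to $\Theta=\Theta^T$ and, for each $j=1,\dots,p$, $\|\Theta_j\|_1\le\beta^+_j+\beta^-_j$, $\beta^+_j\ge0$,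 $\beta^-_j\ge0$. The weak hierarchical lasso is the same problem without the symmetry constraint $\Theta=\Theta^T$. *)

From HB Require Import structures.
From mathcomp Require Import all_boot all_order all_algebra.
From mathcomp Require Import reals.
Set Implicit Arguments. Unset Strict Implicit. Unset Printing Implicit Defensive.
Import Order.TTheory GRing.Theory Num.Theory.
Local Open Scope ring_scope.

Section HierLasso.
Variables (R : realType) (n p : nat).

Definition soft (c l : R) : R := Num.sg c * Num.max (`|c| - l) 0.

Definition colprod (X : 'M[R]_(n, p)) (j k : 'I_p) : 'I_n -> R :=
  fun i => X i j * X i k.

Definition dotv (a b : 'I_n -> R) : R := \sum_i a i * b i.

Definition qloss (X : 'M[R]_(n, p)) (y : 'I_n -> R) (b0 : R) (b : 'I_p -> R)
    (Th : 'M[R]_p) : R :=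
  (1/2) * \sum_i (y i - b0 - \sum_j X i j * b j
                  - (1/2) * \sum_j \sum_k X i j * Th j k * X i k) ^+ 2.

Definition l1off (Th : 'M[R]_p) : R := \sum_j \sum_(k | k != j) `|Th j k|.

Definition rowl1 (Th : 'M[R]_p) (j : 'I_p) : R := \sum_k `|Th j k|.

Definition hl_obj (X : 'M[R]_(n, p)) (y : 'I_n -> R) (lam : R) (b0 : R)
    (bp bm : 'I_p -> R) (Th : 'M[R]_p) : R :=
  qloss X y b0 (fun j => bp j - bm j) Th + lam * \sum_j (bp j + bm j)
  + (lam / 2) * l1off Th.

Definition weak_feasible (bp bm : 'I_p -> R) (Th : 'M[R]_p) : Prop :=
  (forall j, Th j j = 0) /\
  (forall j, rowl1 Th j <= bp j + bm j /\ 0 <= bp j /\ 0 <= bm j).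

Definition strong_feasible (bp bm : 'I_p -> R) (Th : 'M[R]_p) : Prop :=
  Th = Th^T /\ weak_feasible bp bm Th.

Definition is_solution (feas : ('I_p -> R) -> ('I_p -> R) -> 'M[R]_p -> Prop)
    (X : 'M[R]_(n, p)) (y : 'I_n -> R) (lam : R) (b0 : R)
    (bp bm : 'I_p -> R) (Th : 'M[R]_p) : Prop :=
  feas bp bm Th /\
  forall b0' bp' bm' Th', feas bp' bm' Th' ->
    hl_obj X y lam b0 bp bm Th <= hl_obj X y lam b0' bp' bm' Th'.

Definition strong_hl_solution := is_solution strong_feasible.
Definition weak_hl_solution := is_solution weak_feasible.

Definition fitted (X : 'M[R]_(n, p)) (b0 : R) (bp bm : 'I_p -> R)
    (Th : 'M[R]_p) : 'I_n -> R :=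
  fun i => b0 + \sum_j X i j * (bp j - bm j)
           + (1/2) * \sum_j \sum_(k | k != j) Th j k * colprod X j k i.

Definition resid_j (X : 'M[R]_(n, p)) (y : 'I_n -> R) (b0 : R)
    (bp bm : 'I_p -> R) (Th : 'M[R]_p) (j : 'I_p) : 'I_n -> R :=
  fun i => y i - fitted X b0 bp bm Th i + X i j * (bp j - bm j).

Definition resid_jk (X : 'M[R]_(n, p)) (y : 'I_n -> R) (b0 : R)
    (bp bm : 'I_p -> R) (Th : 'M[R]_p) (j k : 'I_p) : 'I_n -> R :=
  fun i => y i - fitted X b0 bp bm Th i
           + colprod X j k i * ((Th j k + Th k j) / 2).

End HierLasso.

From HB Require Import structures.
From mathcomp Require Import all_boot all_order all_algebra.
From mathcomp Require Import reals ring lra.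
Set Implicit Arguments. Unset Strict Implicit. Unset Printing Implicit Defensive.
Import Order.TTheory GRing.Theory Num.Theory.
Local Open Scope ring_scope.

(* Every claim is a first-order optimality condition.  Along a direction that stays
   feasible for small [t > 0] and along which the penalty grows at rate at most [a], the
   objective exceeds its optimum by [t D + O(t^2)], hence [D >= 0].  Write [r] for the
   full residual, [g j = x_j^T r] and [G j k = (x_j * x_k)^T r].  Trading [bp j] against
   [bm j] at fixed budget shows that [g j] has the sign of [beta j] and [|g j| <= lam],
   with equality when row [j]'s hierarchy constraint is slack; so [beta j] has the stated
   soft-threshold form with [alpha j = lam - |g j|].  Growing [|Th j k|] (together with
   [Th k j] in the strong case) while paying the extra budget with the coefficients
   aligned with [g], and shrinking it while releasing budget through the nonzero
   coefficient, shows that [Th j k] satisfies the optimality condition of a scalar lasso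
   with threshold [lam + alpha j + alpha k] (strong) or [lam + 2 alpha j] (weak).
   Averaging the weak conditions for [(j, k)] and [(k, j)] gives the threshold
   [lam + 2 min (alpha j) (alpha k)], and soft thresholding solves the scalar lasso. *)

Section Scalar.
Variable R : realType.

Lemma sg_bound (x : R) : -1 <= Num.sg x <= 1.
Proof. by rewrite -ler_norml normr_sg; case: (x != 0) => /=; lra. Qed.

Lemma normrB_sg (x t : R) : 0 <= t <= `|x| -> `|x - t * Num.sg x| = `|x| - t.
Proof.
have [x0|x0|->] := ltgtP x 0; move=> /andP[t0 tx].
- by rewrite ltr0_sg // ltr0_norm // in tx *; rewrite ler0_norm; lra.
- by rewrite gtr0_sg // gtr0_norm // in tx *; rewrite ger0_norm; lra.
- by rewrite sgr0 mulr0 subrr normr0 in tx *; lra.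
Qed.

Lemma norm_step_le (x u c t : R) : 0 < t -> `|u| <= c -> `|x + t * u| <= `|x| + t * c.
Proof.
move=> tp uc; apply: (le_trans (ler_normD _ _)).
by rewrite normrM gtr0_norm // lerD2l ler_pM2l.
Qed.

Lemma soft_add_norm (be g : R) : 0 <= be * g -> soft (g + be) `|g| = be.
Proof.
rewrite /soft; have [b0|b0|->] := ltgtP be 0 => hbg; last first.
- by rewrite addr0 subrr maxxx mulr0.
- have g0 : 0 <= g by rewrite -(pmulr_rge0 _ b0).
  have gb : 0 < g + be by lra.
  by rewrite gtr0_sg // gtr0_norm // ger0_norm // max_l; lra.
- have g0 : g <= 0 by rewrite -(nmulr_rge0 _ b0).
  have gb : g + be < 0 by lra.
  by rewrite ltr0_sg // ltr0_norm // ler0_norm // max_l; lra.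
Qed.

(* [th] minimizes [d/2 x^2 - (G + d th) x + L |x|] over [x]: [G] is the residual
   correlation at [th], and this is the subgradient condition. *)
Definition lasso_kkt (th G L : R) : Prop :=
  `|G| <= L /\ (th != 0 -> G = Num.sg th * L).

Lemma lasso_kktI (th G L : R) :
  `|G| <= L -> (th != 0 -> L <= Num.sg th * G) -> lasso_kkt th G L.
Proof.
move=> GL hth; split=> // th0; have := hth th0.
move: GL; rewrite ler_norml => /andP[GL1 GL2].
have [t0|t0|t0] := ltgtP th 0; last by rewrite t0 eqxx in th0.
- by rewrite ltr0_sg //; lra.
- by rewrite gtr0_sg //; lra.
Qed.

Lemma soft_lasso_kkt (th G d L : R) : 0 < L -> 0 <= d -> (d = 0 -> G = 0) ->
  lasso_kkt th G L -> th = soft (G + d * th) L / d.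
Proof.
move=> L0 d0 dG [GL hth]; rewrite /soft.
have [->|th0] := eqVneq th 0; first by rewrite mulr0 addr0 max_r ?mulr0 ?mul0r; lra.
have {}d0 : 0 < d.
  rewrite lt_def d0 andbT; apply/eqP => /dG/eqP.
  by rewrite (hth th0) mulf_eq0 sgr_eq0 (negbTE th0) gt_eqF.
rewrite (hth th0); have [t0|t0|t0] := ltgtP th 0; last by rewrite t0 eqxx in th0.
- have dt : d * th < 0 by rewrite pmulr_rlt0.
  have c0 : -1 * L + d * th < 0 by lra.
  rewrite ltr0_sg // ltr0_sg // ltr0_norm // max_l; last by lra.
  by apply/(mulIf (lt0r_neq0 d0)); rewrite mulfVK ?lt0r_neq0 //; ring.
- have dt : 0 < d * th by rewrite pmulr_rgt0.
  have c0 : 0 < 1 * L + d * th by lra.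
  rewrite gtr0_sg // gtr0_sg // gtr0_norm // max_l; last by lra.
  by apply/(mulIf (lt0r_neq0 d0)); rewrite mulfVK ?lt0r_neq0 //; ring.
Qed.

Lemma lasso_kkt_avg (a c G A B : R) : 0 < A -> 0 < B ->
  lasso_kkt a G A -> lasso_kkt c G B -> lasso_kkt ((a + c) / 2) G (Num.min A B).
Proof.
move=> A0 B0 [GA ha] [GB hc]; split; first by rewrite le_min GA.
have sgE (x L : R) : (x != 0 -> G = Num.sg x * L) ->
    (0 < x -> G = L) /\ (x < 0 -> G = - L).
  move=> hx; split=> x0.
  - by rewrite hx ?gtr0_sg ?mul1r // (gt_eqF x0).
  - by rewrite hx ?ltr0_sg ?mulN1r // (lt_eqF x0).
have [ha1 ha2] := sgE _ _ ha; have [hc1 hc2] := sgE _ _ hc.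
move: GA GB; rewrite !ler_norml => /andP[? ?] /andP[? ?].
move=> nz; have [x0|x0|x0] := ltgtP ((a + c) / 2) 0; last by rewrite x0 eqxx in nz.
all: rewrite ?(ltr0_sg x0) ?(gtr0_sg x0).
all: have [m|m] := leP A B; rewrite ?(min_l m) ?(min_r (ltW m)).
all: have [a0|a0|a0] := ltgtP a 0; have [c0|c0|c0] := ltgtP c 0.
all: try have := ha1 a0; try have := ha2 a0; try have := hc1 c0; try have := hc2 c0.
all: lra.
Qed.

Lemma ge0_of_quad_small (A B t0 : R) : 0 < t0 -> 0 <= B ->
  (forall t, 0 < t -> t <= t0 -> 0 <= t * A + t ^+ 2 * B) -> 0 <= A.
Proof.
move=> t0p B0 H; rewrite leNgt; apply/negP => A0.
pose t := Num.min t0 (- A / (2 * B + 1)).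
have B1 : 0 < 2 * B + 1 by lra.
have tp : 0 < t by rewrite lt_min t0p /= divr_gt0 // oppr_gt0.
have tA : t * (2 * B + 1) <= - A by rewrite -ler_pdivlMr // ge_min lexx orbT.
have : 0 <= t * (A + t * B) by rewrite mulrDr mulrA -expr2 H // ge_min lexx.
rewrite pmulr_rge0 //; nra.
Qed.

Lemma addr_min2 (l a b : R) : l + 2 * Num.min a b = Num.min (l + 2 * a) (l + 2 * b).
Proof.
have [m|m] := leP a b; first by rewrite !min_l //; lra.
by rewrite !min_r ?(ltW m) //; lra.
Qed.

End Scalar.

Section Residual.
Variables (R : realType) (n p : nat) (X : 'M[R]_(n, p)) (y : 'I_n -> R) (b0 : R).

Definition res (b : 'I_p -> R) (Th : 'M[R]_p) (i : 'I_n) : R :=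
  y i - b0 - \sum_j X i j * b j - 1/2 * \sum_j \sum_k X i j * Th j k * X i k.

Definition corr (b : 'I_p -> R) (Th : 'M[R]_p) (j : 'I_p) : R :=
  \sum_i X i j * res b Th i.

Definition corr2 (b : 'I_p -> R) (Th : 'M[R]_p) (j k : 'I_p) : R :=
  \sum_i X i j * X i k * res b Th i.

Lemma corr2C b Th j k : corr2 b Th k j = corr2 b Th j k.
Proof. by apply: eq_bigr => i _; rewrite (mulrC (X i k)). Qed.

Lemma res_eq b b' Th i : b =1 b' -> res b Th i = res b' Th i.
Proof. by move=> bb'; rewrite /res (eq_bigr _ (fun j _ => congr1 _ (bb' j))). Qed.

Definition dfit (Db : 'I_p -> R) (DTh : 'M[R]_p) (i : 'I_n) : R :=
  \sum_j X i j * Db j + 1/2 * \sum_j \sum_k X i j * DTh j k * X i k.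

Lemma res_move b Db Th DTh t i :
  res (fun j => b j + t * Db j) (Th + t *: DTh) i = res b Th i - t * dfit Db DTh i.
Proof.
rewrite /res /dfit.
have -> : \sum_j X i j * (b j + t * Db j) = \sum_j X i j * b j + t * \sum_j X i j * Db j.
  by rewrite mulr_sumr -big_split /=; apply: eq_bigr => j _; ring.
have -> : \sum_j \sum_k X i j * (Th + t *: DTh) j k * X i k
   = \sum_j \sum_k X i j * Th j k * X i k + t * \sum_j \sum_k X i j * DTh j k * X i k.
  rewrite mulr_sumr -big_split /=; apply: eq_bigr => j _.
  by rewrite mulr_sumr -big_split /=; apply: eq_bigr => k _; rewrite !mxE; ring.
ring.
Qed.

Lemma sum_res_dfit b Th Db DTh : \sum_i res b Th i * dfit Db DTh i =
  \sum_j Db j * corr b Th j + 1/2 * \sum_j \sum_k DTh j k * corr2 b Th j k.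
Proof.
rewrite /dfit /corr /corr2.
under eq_bigr do rewrite mulrDr.
rewrite big_split /=; congr (_ + _).
  under eq_bigr do rewrite mulr_sumr.
  rewrite exchange_big /=; apply: eq_bigr => j _.
  by rewrite mulr_sumr; apply: eq_bigr => i _; ring.
under eq_bigr do rewrite mulrCA.
rewrite -mulr_sumr; congr (_ * _).
transitivity (\sum_i \sum_j \sum_k X i j * X i k * res b Th i * DTh j k).
  apply: eq_bigr => i _; rewrite mulr_sumr; apply: eq_bigr => j _.
  by rewrite mulr_sumr; apply: eq_bigr => k _; ring.
rewrite exchange_big /=; apply: eq_bigr => j _; rewrite exchange_big /=.
by apply: eq_bigr => k _; rewrite mulrC mulr_suml.
Qed.

Lemma fitted_res (bp bm : 'I_p -> R) (Th : 'M[R]_p) i : (forall u, Th u u = 0) ->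
  fitted X b0 bp bm Th i = y i - res (fun j => bp j - bm j) Th i.
Proof.
move=> Th0; rewrite /fitted /res.
have -> : \sum_j \sum_(k | k != j) Th j k * colprod X j k i
        = \sum_j \sum_k X i j * Th j k * X i k.
  apply: eq_bigr => j _; rewrite [RHS](bigD1 j) //= Th0 mulr0 mul0r add0r.
  by apply: eq_bigr => k _; rewrite /colprod; ring.
ring.
Qed.

Lemma dotv_resid_j (bp bm : 'I_p -> R) (Th : 'M[R]_p) j :
  (forall u, Th u u = 0) -> \sum_i X i j ^+ 2 = 1 ->
  dotv (fun i => X i j) (resid_j X y b0 bp bm Th j)
  = corr (fun j => bp j - bm j) Th j + (bp j - bm j).
Proof.
move=> Th0 Xj1; rewrite /dotv /resid_j.
under eq_bigr do rewrite fitted_res //.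
transitivity (corr (fun j => bp j - bm j) Th j + (bp j - bm j) * \sum_i X i j ^+ 2).
  by rewrite mulr_sumr -big_split /=; apply: eq_bigr => i _; ring.
by rewrite Xj1 mulr1.
Qed.

Lemma dotv_resid_jk (bp bm : 'I_p -> R) (Th : 'M[R]_p) j k : (forall u, Th u u = 0) ->
  dotv (colprod X j k) (resid_jk X y b0 bp bm Th j k)
  = corr2 (fun j => bp j - bm j) Th j k
    + dotv (colprod X j k) (colprod X j k) * ((Th j k + Th k j) / 2).
Proof.
move=> Th0; rewrite /dotv /resid_jk mulr_suml -big_split /=.
by apply: eq_bigr => i _; rewrite fitted_res // /colprod; ring.
Qed.

Lemma dotv_self_ge0 (a : 'I_n -> R) : 0 <= dotv a a.
Proof. by apply: sumr_ge0 => i _; rewrite -expr2 sqr_ge0. Qed.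

Lemma corr2_eq0 b Th j k :
  dotv (colprod X j k) (colprod X j k) = 0 -> corr2 b Th j k = 0.
Proof.
move=> /psumr_eq0P X0; rewrite /corr2 big1 // => i _.
have /eqP : colprod X j k i * colprod X j k i = 0.
  by apply: X0 => // i' _; rewrite -expr2 sqr_ge0.
by rewrite mulf_eq0 orbb /colprod => /eqP ->; rewrite mul0r.
Qed.

End Residual.

Section FirstOrder.
Variables (R : realType) (n p : nat) (X : 'M[R]_(n, p)) (y : 'I_n -> R) (lam b0 : R).
Variables (bp bm Dbp Dbm : 'I_p -> R) (Th DTh : 'M[R]_p).

Local Notation beta := (fun j => bp j - bm j).
Local Notation Dbeta := (fun j => Dbp j - Dbm j).
Local Notation r := (res X y b0 beta Th).
Local Notation e := (dfit X Dbeta DTh).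

Lemma hl_obj_move t :
  hl_obj X y lam b0 (fun m => bp m + t * Dbp m) (fun m => bm m + t * Dbm m) (Th + t *: DTh)
  = hl_obj X y lam b0 bp bm Th
    + t * (lam * \sum_j (Dbp j + Dbm j) - \sum_i r i * e i)
    + t ^+ 2 * (1/2 * \sum_i e i ^+ 2)
    + lam / 2 * (l1off (Th + t *: DTh) - l1off Th).
Proof.
have qlossE b Th' : qloss X y b0 b Th' = 1/2 * \sum_i res X y b0 b Th' i ^+ 2 by [].
rewrite /hl_obj !qlossE.
have moveE : (fun j => bp j + t * Dbp j - (bm j + t * Dbm j)) =1 (fun j => beta j + t * Dbeta j).
  by move=> j /=; ring.
under eq_bigr do rewrite (res_eq _ _ _ _ _ moveE) res_move.
have -> : \sum_i (r i - t * e i) ^+ 2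
    = \sum_i r i ^+ 2 - 2 * t * \sum_i r i * e i + t ^+ 2 * \sum_i e i ^+ 2.
  by rewrite !mulr_sumr -sumrB -big_split /=; apply: eq_bigr => i _; ring.
have -> : \sum_j (bp j + t * Dbp j + (bm j + t * Dbm j))
    = \sum_j (bp j + bm j) + t * \sum_j (Dbp j + Dbm j).
  by rewrite mulr_sumr -big_split /=; apply: eq_bigr => j _; ring.
by field.
Qed.

Lemma solution_dir_ge0 feas (a t0 : R) :
  is_solution feas X y lam b0 bp bm Th -> 0 <= lam -> 0 < t0 ->
  (forall t, 0 < t -> t <= t0 ->
     feas (fun m => bp m + t * Dbp m) (fun m => bm m + t * Dbm m) (Th + t *: DTh) /\
     l1off (Th + t *: DTh) <= l1off Th + t * a) ->
  0 <= lam * \sum_j (Dbp j + Dbm j) + lam / 2 * a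
       - \sum_j Dbeta j * corr X y b0 beta Th j
       - 1/2 * \sum_j \sum_k DTh j k * corr2 X y b0 beta Th j k.
Proof.
move=> [_ opt] lam0 t0p move_ok.
suff : 0 <= lam * \sum_j (Dbp j + Dbm j) + lam / 2 * a - \sum_i r i * e i.
  by rewrite sum_res_dfit opprD addrA.
apply: (ge0_of_quad_small (B := 1/2 * \sum_i e i ^+ 2) t0p) => [|t tp tt0].
  by rewrite mulr_ge0 ?sumr_ge0 // => [|i _]; [lra | exact: sqr_ge0].
have [feas_t l1_t] := move_ok t tp tt0.
have := opt b0 _ _ _ feas_t; rewrite hl_obj_move.
have : lam / 2 * (l1off (Th + t *: DTh) - l1off Th) <= lam / 2 * (t * a).
  by rewrite ler_wpM2l ?divr_ge0 //; lra.
lra.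
Qed.

End FirstOrder.

Section Coordinates.
Variables (R : realType) (p : nat).
Implicit Types (Th : 'M[R]_p) (j k m : 'I_p).

Definition coordv j (c : R) : 'I_p -> R := fun m => if m == j then c else 0.

Lemma sum_coordv j c : \sum_m coordv j c m = c.
Proof. by rewrite (bigD1 j) //= /coordv eqxx big1 ?addr0 // => m /negbTE ->. Qed.

Lemma sum_coordvM j c (h : 'I_p -> R) : \sum_m coordv j c m * h m = c * h j.
Proof.
by rewrite (bigD1 j) //= /coordv eqxx big1 ?addr0 // => m /negbTE ->; rewrite mul0r.
Qed.

Lemma sum_coordv2 j k c (h : 'I_p -> 'I_p -> R) :
  \sum_u \sum_v (if (u == j) && (v == k) then c else 0) * h u v = c * h j k.
Proof.
rewrite -(sum_coordvM j c (h^~ k)); apply: eq_bigr => u _; rewrite /coordv.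
case: eqP => _; last by rewrite mul0r big1 // => v _; rewrite mul0r.
by rewrite (bigD1 k) //= eqxx big1 ?addr0 // => v /negbTE ->; rewrite mul0r.
Qed.

Lemma sum_coordv_row j k c (u : 'I_p) :
  \sum_v (if (u == j) && (v == k) then c else 0) = coordv j c u.
Proof.
rewrite /coordv; have [_|uj] := eqVneq u j; last by rewrite big1.
by rewrite (bigD1 k) //= eqxx big1 ?addr0 // => v /negbTE ->.
Qed.

Definition pair_mx j k (s1 s2 : R) : 'M[R]_p :=
  \matrix_(u, v) ((if (u == j) && (v == k) then s1 else 0)
                  + (if (u == k) && (v == j) then s2 else 0)).

Lemma pair_mx_diag j k s1 s2 u : j != k -> pair_mx j k s1 s2 u u = 0.
Proof.
move=> jk; rewrite mxE; have [->|uj] := eqVneq u j.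
  by rewrite (negbTE jk) andbF andFb addr0.
by rewrite andFb add0r; case: eqP => // ->; rewrite (negbTE uj) andbF.
Qed.

Lemma pair_mx_tr j k s : (pair_mx j k s s)^T = pair_mx j k s s.
Proof.
by apply/matrixP => u v; rewrite !mxE addrC (andbC (v == j)) (andbC (v == k)).
Qed.

Lemma sum_pair_mxM j k s1 s2 (h : 'I_p -> 'I_p -> R) :
  \sum_u \sum_v pair_mx j k s1 s2 u v * h u v = s1 * h j k + s2 * h k j.
Proof.
rewrite -!sum_coordv2 -big_split /=; apply: eq_bigr => u _.
by rewrite -big_split /=; apply: eq_bigr => v _; rewrite mxE mulrDl.
Qed.

Lemma norm_pair_mx Th j k s1 s2 t u v : j != k ->
  `|(Th + t *: pair_mx j k s1 s2) u v| =
  `|Th u v| + (if (u == j) && (v == k) then `|Th j k + t * s1| - `|Th j k| else 0)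
            + (if (u == k) && (v == j) then `|Th k j + t * s2| - `|Th k j| else 0).
Proof.
move=> jk; have kj : (k == j) = false by rewrite eq_sym (negbTE jk).
rewrite !mxE; have [/andP[/eqP-> /eqP->]|A] := boolP ((u == j) && (v == k)).
  by rewrite kj andbF !addr0; ring.
have [/andP[/eqP-> /eqP->]|B] := boolP ((u == k) && (v == j)).
  by rewrite !add0r addr0; ring.
by rewrite !addr0 mulr0 addr0.
Qed.

Lemma rowl1_pair_mx Th j k s1 s2 t m : j != k ->
  rowl1 (Th + t *: pair_mx j k s1 s2) m
  = rowl1 Th m + coordv j (`|Th j k + t * s1| - `|Th j k|) m
               + coordv k (`|Th k j + t * s2| - `|Th k j|) m.
Proof.
move=> jk; rewrite /rowl1 -(sum_coordv_row j k) -(sum_coordv_row k j) -!big_split /=.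
by apply: eq_bigr => v _; rewrite norm_pair_mx.
Qed.

Lemma l1off_rowl1 Th : (forall u, Th u u = 0) -> l1off Th = \sum_j rowl1 Th j.
Proof.
by move=> Th0; apply: eq_bigr => j _; rewrite /rowl1 [RHS](bigD1 j) //= Th0 normr0 add0r.
Qed.

Lemma norm_le_rowl1 Th j k : `|Th j k| <= rowl1 Th j.
Proof. by rewrite /rowl1 (bigD1 k) //= lerDl sumr_ge0. Qed.

End Coordinates.

Definition hl_feasible (R : realType) (p : nat) (sym : bool) :=
  if sym then @strong_feasible R p else @weak_feasible R p.

Section Solution.
Variables (R : realType) (n p : nat) (X : 'M[R]_(n, p)) (y : 'I_n -> R) (lam b0 : R).
Variables (bp bm : 'I_p -> R) (Th : 'M[R]_p) (sym : bool).
Hypotheses (lam_gt0 : 0 < lam) (sol : is_solution (hl_feasible sym) X y lam b0 bp bm Th).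

Local Notation beta := (fun j => bp j - bm j).
Local Notation g := (corr X y b0 beta Th).
Local Notation G := (corr2 X y b0 beta Th).

Lemma sol_weak_feasible : weak_feasible bp bm Th.
Proof. by case: sol; rewrite /hl_feasible; case: sym => [[]|]. Qed.

Lemma Th_diag u : Th u u = 0.
Proof. by case: sol_weak_feasible. Qed.

Lemma rowl1_le_budget m : rowl1 Th m <= bp m + bm m.
Proof. by case: sol_weak_feasible => _ /(_ m) []. Qed.

Lemma bp_ge0 m : 0 <= bp m.
Proof. by case: sol_weak_feasible => _ /(_ m) [_ []]. Qed.

Lemma bm_ge0 m : 0 <= bm m.
Proof. by case: sol_weak_feasible => _ /(_ m) [_ []]. Qed.

Lemma Th_sym j k : sym -> Th k j = Th j k.
Proof.
by case: sol; rewrite /hl_feasible; case: sym => // -[ThT _] _ _; rewrite {1}ThT mxE.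
Qed.

Lemma hl_feasibleI (bp' bm' : 'I_p -> R) (Th' : 'M[R]_p) :
  (sym -> forall j k, Th' k j = Th' j k) -> (forall u, Th' u u = 0) ->
  (forall m, [/\ rowl1 Th' m <= bp' m + bm' m, 0 <= bp' m & 0 <= bm' m]) ->
  hl_feasible sym bp' bm' Th'.
Proof.
move=> Th'sym Th'0 hrow; have wf : weak_feasible bp' bm' Th'.
  by split=> // m; have [] := hrow m.
rewrite /hl_feasible; case: sym Th'sym => // /(_ isT) Th'sym; split=> //.
by apply/matrixP => j k; rewrite mxE Th'sym.
Qed.

Lemma move_ge0 (Dbp Dbm a : 'I_p -> R) (DTh : 'M[R]_p) (t0 : R) : 0 < t0 ->
  (sym -> forall j k, DTh k j = DTh j k) -> (forall u, DTh u u = 0) ->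
  (forall t m, 0 < t -> t <= t0 ->
     [/\ rowl1 (Th + t *: DTh) m <= rowl1 Th m + t * a m,
         rowl1 Th m + t * a m <= bp m + bm m + t * (Dbp m + Dbm m),
         0 <= bp m + t * Dbp m & 0 <= bm m + t * Dbm m]) ->
  0 <= lam * \sum_m (Dbp m + Dbm m) + lam / 2 * \sum_m a m
       - \sum_m (Dbp m - Dbm m) * g m - 1/2 * \sum_u \sum_v DTh u v * G u v.
Proof.
move=> t0p DThsym DTh0 hmove.
apply: (solution_dir_ge0 sol (ltW lam_gt0) t0p) => t tp tt0.
have Th'0 u : (Th + t *: DTh) u u = 0 by rewrite !mxE Th_diag DTh0 mulr0 addr0.
split.
- apply: hl_feasibleI => // [hs j k|m]; first by rewrite !mxE Th_sym // DThsym.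
  by have [h1 h2 h3 h4] := hmove t m tp tt0; split=> //; lra.
- rewrite (l1off_rowl1 Th'0) (l1off_rowl1 Th_diag) mulr_sumr -big_split /=.
  by apply: ler_sum => m _; have [] := hmove t m tp tt0.
Qed.

Lemma coef_move j (a c t0 : R) : 0 < t0 ->
  (forall t, 0 < t -> t <= t0 ->
     [/\ 0 <= bp j + t * a, 0 <= bm j + t * c & rowl1 Th j <= bp j + bm j + t * (a + c)]) ->
  0 <= lam * (a + c) - (a - c) * g j.
Proof.
move=> t0p hmove.
have := @move_ge0 (coordv j a) (coordv j c) (fun _ => 0) 0 t0 t0p.
have sum0 : \sum_u \sum_v (0 : 'M[R]_p) u v * G u v = 0.
  by rewrite big1 // => u _; rewrite big1 // => v _; rewrite mxE mul0r.
under [X in _ - X - _]eq_bigr do rewrite mulrBl.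
rewrite big_split sumrB /= !sum_coordv !sum_coordvM sum0 big1 // mulr0 addr0 mulr0 subr0.
rewrite -mulrBl; apply=> [_ u v|u|t m tp tt0]; rewrite ?mxE //.
rewrite scaler0 addr0 mulr0 addr0 /coordv; have [->|_] := eqVneq m j.
  by have [] := hmove t tp tt0.
by rewrite !(mulr0, addr0) lexx rowl1_le_budget bp_ge0 bm_ge0.
Qed.

(* The rows move their l1 norms as fast as their budgets, so each unit costs [lam] in
   the budget penalty plus [lam / 2] in [l1off]: hence [3 * lam / 2]. *)
Lemma pair_move (j k : 'I_p) (s1 s2 pj mj pk mk t0 : R) :
  j != k -> 0 < t0 -> (sym -> s2 = s1) ->
  (forall t, 0 < t -> t <= t0 ->
     `|Th j k + t * s1| <= `|Th j k| + t * (pj + mj) /\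
     `|Th k j + t * s2| <= `|Th k j| + t * (pk + mk)) ->
  (forall t, 0 < t -> t <= t0 ->
     [/\ 0 <= bp j + t * pj, 0 <= bm j + t * mj, 0 <= bp k + t * pk & 0 <= bm k + t * mk]) ->
  0 <= 3 * lam / 2 * (pj + mj + pk + mk) - (pj - mj) * g j - (pk - mk) * g k
       - (s1 + s2) / 2 * G j k.
Proof.
move=> jk t0p s21 hnorm hcoef; have kj : k != j by rewrite eq_sym.
pose Dbp m := coordv j pj m + coordv k pk m.
pose Dbm m := coordv j mj m + coordv k mk m.
have hsym : sym -> forall u v, pair_mx j k s1 s2 v u = pair_mx j k s1 s2 u v.
  by move=> /s21 -> u v; rewrite -[in LHS]pair_mx_tr mxE.
have hrow t m : 0 < t -> t <= t0 -> [/\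
    rowl1 (Th + t *: pair_mx j k s1 s2) m <= rowl1 Th m + t * (Dbp m + Dbm m),
    rowl1 Th m + t * (Dbp m + Dbm m) <= bp m + bm m + t * (Dbp m + Dbm m),
    0 <= bp m + t * Dbp m & 0 <= bm m + t * Dbm m].
  move=> tp tt0; have [n1 n2] := hnorm t tp tt0; have [c1 c2 c3 c4] := hcoef t tp tt0.
  have := rowl1_le_budget m; rewrite rowl1_pair_mx // /Dbp /Dbm /coordv.
  have [->|mj'] := eqVneq m j.
    by rewrite (negbTE jk) !addr0 => hb; split; lra.
  have [->|mk'] := eqVneq m k.
    by rewrite !add0r => hb; split; lra.
  by rewrite !(addr0, mulr0) lexx bp_ge0 bm_ge0.
have := move_ge0 t0p hsym (fun u => pair_mx_diag s1 s2 u jk) hrow.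
have sumD : \sum_m (Dbp m + Dbm m) = pj + mj + pk + mk.
  by rewrite !big_split /= !sum_coordv; ring.
have sumB : \sum_m (Dbp m - Dbm m) * g m = (pj - mj) * g j + (pk - mk) * g k.
  under eq_bigr do rewrite mulrBl !mulrDl.
  by rewrite sumrB !big_split /= !sum_coordvM; ring.
rewrite sumD sumB sum_pair_mxM corr2C; lra.
Qed.

Lemma corr_norm_le j : `|g j| <= lam.
Proof.
have := rowl1_le_budget j; have := bp_ge0 j; have := bm_ge0 j => bm0 bp0 budget.
have h1 : 0 <= lam * (1 + 0) - (1 - 0) * g j.
  by apply: (coef_move ltr01) => t tp _; split; lra.
have h2 : 0 <= lam * (0 + 1) - (0 - 1) * g j.
  by apply: (coef_move ltr01) => t tp _; split; lra.
by rewrite ler_norml; apply/andP; split; lra.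
Qed.

Lemma corr_ge0 j : 0 < bp j -> 0 <= g j.
Proof.
move=> bp0; have := rowl1_le_budget j; have := bm_ge0 j => bm0 budget.
have : 0 <= lam * (-1 + 1) - (-1 - 1) * g j.
  by apply: (coef_move bp0) => t tp tbp; split; lra.
lra.
Qed.

Lemma corr_le0 j : 0 < bm j -> g j <= 0.
Proof.
move=> bm0; have := rowl1_le_budget j; have := bp_ge0 j => bp0 budget.
have : 0 <= lam * (1 + -1) - (1 - -1) * g j.
  by apply: (coef_move bm0) => t tp tbm; split; lra.
lra.
Qed.

Lemma corr_norm_slack j : rowl1 Th j < bp j + bm j -> `|g j| = lam.
Proof.
move=> slack; apply/eqP; rewrite eq_le corr_norm_le /=.
have := bp_ge0 j; have := bm_ge0 j => bm0 bp0.
have [bpj|bpj] := ltP 0 (bp j).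
  have t0p : 0 < Num.min (bp j) (bp j + bm j - rowl1 Th j) by rewrite lt_min bpj /=; lra.
  have : 0 <= lam * (-1 + 0) - (-1 - 0) * g j.
    by apply: (coef_move t0p) => t tp; rewrite le_min => /andP[t1 t2]; split; lra.
  by have := ler_norm (g j); lra.
have [bmj|bmj] := ltP 0 (bm j).
  have t0p : 0 < Num.min (bm j) (bp j + bm j - rowl1 Th j) by rewrite lt_min bmj /=; lra.
  have : 0 <= lam * (0 + -1) - (0 - -1) * g j.
    by apply: (coef_move t0p) => t tp; rewrite le_min => /andP[t1 t2]; split; lra.
  by have := ler_norm (- g j); rewrite normrN; lra.
have : 0 <= rowl1 Th j by apply: sumr_ge0 => k _; apply: normr_ge0.
lra.
Qed.

(* Shrinking row [j]'s budget shrinks [bp j] if it is positive and [bm j] otherwise;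
   [beta j] then moves by [- active_sign j] per unit, for up to [active_coef j]. *)
Definition active_sign j : R := if 0 < bp j then 1 else -1.
Definition active_coef j : R := if 0 < bp j then bp j else bm j.

Lemma active_coef_gt0 j : 0 < rowl1 Th j -> 0 < active_coef j.
Proof.
rewrite /active_coef; case: ifP => // /negbT; rewrite -leNgt => bp0 row0.
by have := rowl1_le_budget j; have := bp_ge0 j; lra.
Qed.

Lemma active_coef_shrink j t : 0 <= t -> t <= active_coef j ->
  0 <= bp j + t * - ((1 + active_sign j) / 2) /\ 0 <= bm j + t * - ((1 - active_sign j) / 2).
Proof.
have := bp_ge0 j; have := bm_ge0 j; rewrite /active_sign /active_coef.
by case: ifP => _ bm0 bp0 t0 tc; split; lra.
Qed.

Lemma active_sign_corr_le j : active_sign j * g j <= `|g j|.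
Proof.
by rewrite /active_sign; case: ifP => _; rewrite ?mul1r ?mulN1r ?ler_norm // -normrN ler_norm.
Qed.

Lemma sym_weightP : (sym /\ sym%:R = 1 :> R) \/ (~~ sym /\ sym%:R = 0 :> R).
Proof. by case: sym; [left | right]. Qed.

(* Grow [Th j k] (and [Th k j] if [sym]) by [t] towards the sign of [G j k],
   paying the extra budget with the coefficient aligned with [g j] (and [g k]). *)
Lemma corr2_inc j k : j != k ->
  (1 + sym%:R) * `|G j k| + 2 * (`|g j| + sym%:R * `|g k|) <= 3 * (1 + sym%:R) * lam.
Proof.
move=> jk; set s := Num.sg (G j k); set tj := Num.sg (g j); set tk := Num.sg (g k).
have := sg_bound (G j k); have := sg_bound (g j); have := sg_bound (g k).
rewrite -/s -/tj -/tk => /andP[tk1 tk2] /andP[tj1 tj2] /andP[s1 s2].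
have w0 : 0 <= sym%:R :> R by rewrite ler0n.
have sym_ok : sym -> sym%:R * s = s by move=> ->; rewrite mul1r.
have norm_ok t : 0 < t -> t <= 1 ->
    `|Th j k + t * s| <= `|Th j k| + t * ((1 + tj) / 2 + (1 - tj) / 2) /\
    `|Th k j + t * (sym%:R * s)|
      <= `|Th k j| + t * (sym%:R * ((1 + tk) / 2) + sym%:R * ((1 - tk) / 2)).
  have s_le1 : `|s| <= 1 by rewrite ler_norml; apply/andP; split; lra.
  move=> tp _; split; apply: norm_step_le => //.
    by have -> : (1 + tj) / 2 + (1 - tj) / 2 = 1 by field.
  have -> : sym%:R * ((1 + tk) / 2) + sym%:R * ((1 - tk) / 2) = sym%:R :> R by field.
  by rewrite normrM (ger0_norm w0) ler_piMr.
have coef_ok t : 0 < t -> t <= 1 -> [/\ 0 <= bp j + t * ((1 + tj) / 2),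
    0 <= bm j + t * ((1 - tj) / 2), 0 <= bp k + t * (sym%:R * ((1 + tk) / 2))
    & 0 <= bm k + t * (sym%:R * ((1 - tk) / 2))].
  move=> tp _; have := bp_ge0 j; have := bm_ge0 j; have := bp_ge0 k; have := bm_ge0 k.
  by split; rewrite addr_ge0 // !mulr_ge0 //; lra.
have := pair_move jk ltr01 sym_ok norm_ok coef_ok.
rewrite (normrEsg (G j k)) (normrEsg (g j)) (normrEsg (g k)) -/s -/tj -/tk.
by case: sym_weightP => -[_ ->]; lra.
Qed.

(* Shrink [|Th j k|] (and [|Th k j|] if [sym]) by [t] and release the freed budget
   through the active coefficient of row [j] (and [k]). *)
Lemma corr2_dec j k : j != k -> Th j k != 0 ->
  3 * (1 + sym%:R) * lam
    <= (1 + sym%:R) * (Num.sg (Th j k) * G j k) + 2 * (`|g j| + sym%:R * `|g k|).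
Proof.
move=> jk Th0; set s := Num.sg (Th j k).
set sj := active_sign j; set sk := active_sign k.
have Thjk : 0 < `|Th j k| by rewrite normr_gt0.
have cj : 0 < active_coef j := active_coef_gt0 (lt_le_trans Thjk (norm_le_rowl1 Th j k)).
pose ck := if sym then active_coef k else 1.
have ckp : 0 < ck.
  rewrite /ck; case: ifP => // hs; apply: active_coef_gt0.
  by apply: (lt_le_trans _ (norm_le_rowl1 Th k j)); rewrite Th_sym.
pose t0 := Num.min `|Th j k| (Num.min (active_coef j) ck).
have t0p : 0 < t0 by rewrite !lt_min Thjk cj ckp.
have sym_ok : sym -> sym%:R * - s = - s by move=> ->; rewrite mul1r.
have norm_ok t : 0 < t -> t <= t0 ->
    `|Th j k + t * - s| <= `|Th j k| + t * (- ((1 + sj) / 2) + - ((1 - sj) / 2)) /\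
    `|Th k j + t * (sym%:R * - s)|
      <= `|Th k j| + t * (sym%:R * - ((1 + sk) / 2) + sym%:R * - ((1 - sk) / 2)).
  move=> tp; rewrite !le_min => /andP[t1 /andP[t2 t3]].
  have shrink : `|Th j k + t * - s| = `|Th j k| - t.
    by rewrite mulrN normrB_sg // ltW // t1.
  case: sym_weightP => -[hs ->]; rewrite shrink.
  - by rewrite !mul1r (Th_sym j k hs) shrink; split; lra.
  - by rewrite !mul0r mulr0 addr0; split; lra.
have coef_ok t : 0 < t -> t <= t0 -> [/\ 0 <= bp j + t * - ((1 + sj) / 2),
    0 <= bm j + t * - ((1 - sj) / 2), 0 <= bp k + t * (sym%:R * - ((1 + sk) / 2))
    & 0 <= bm k + t * (sym%:R * - ((1 - sk) / 2))].
  move=> tp; rewrite !le_min => /andP[t1 /andP[t2 t3]].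
  have [bj bmj] := active_coef_shrink (ltW tp) t2.
  case: sym_weightP t3 => -[hs ->]; rewrite /ck ?hs => t3.
  - by have [bk bmk] := active_coef_shrink (ltW tp) t3; rewrite !mul1r.
  - by rewrite !mul0r mulr0 !addr0 bp_ge0 bm_ge0.
have := pair_move jk t0p sym_ok norm_ok coef_ok.
have := active_sign_corr_le j; have := active_sign_corr_le k; rewrite -/sj -/sk.
by case: sym_weightP => -[_ ->]; lra.
Qed.

Definition alpha j : R := lam - `|g j|.

Lemma alpha_ge0 j : 0 <= alpha j.
Proof. by rewrite subr_ge0 corr_norm_le. Qed.

Lemma alpha_slack j : rowl1 Th j < bp j + bm j -> alpha j = 0.
Proof. by move=> /corr_norm_slack; rewrite /alpha => ->; rewrite subrr. Qed.

Lemma lasso_kkt_strong j k : sym -> j != k ->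
  lasso_kkt (Th j k) (G j k) (lam + alpha j + alpha k).
Proof.
move=> hs jk; have := corr2_inc jk; have := corr2_dec jk.
have -> : sym%:R = 1 :> R by rewrite hs.
by rewrite /alpha => dec inc; apply: lasso_kktI => [|/dec]; lra.
Qed.

Lemma lasso_kkt_weak j k : ~~ sym -> j != k ->
  lasso_kkt (Th j k) (G j k) (lam + 2 * alpha j).
Proof.
move=> hs jk; have := corr2_inc jk; have := corr2_dec jk.
have -> : sym%:R = 0 :> R by rewrite (negbTE hs).
by rewrite /alpha => dec inc; apply: lasso_kktI => [|/dec]; lra.
Qed.

Lemma beta_corr_ge0 j : 0 <= (bp j - bm j) * g j.
Proof.
have := bp_ge0 j; have := bm_ge0 j => bm0 bp0.
have [bpj|bpj] := ltP 0 (bp j); have [bmj|bmj] := ltP 0 (bm j).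
- by have := corr_ge0 bpj; have := corr_le0 bmj; nra.
- by have := corr_ge0 bpj; nra.
- by have := corr_le0 bmj; nra.
- have -> : bp j - bm j = 0 by lra.
  by rewrite mul0r.
Qed.

Lemma beta_soft j : \sum_i X i j ^+ 2 = 1 ->
  bp j - bm j = soft (dotv (fun i => X i j) (resid_j X y b0 bp bm Th j)) (lam - alpha j).
Proof.
move=> Xj1; have -> : lam - alpha j = `|g j| by rewrite /alpha; ring.
by rewrite dotv_resid_j // ?soft_add_norm ?beta_corr_ge0 //; apply: Th_diag.
Qed.

Lemma entry_soft_strong j k : sym -> k != j ->
  Th j k = soft (dotv (colprod X j k) (resid_jk X y b0 bp bm Th j k))
                (lam + alpha j + alpha k)
           / dotv (colprod X j k) (colprod X j k).
Proof.
move=> hs kj; rewrite dotv_resid_jk; last exact: Th_diag.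
have -> : (Th j k + Th k j) / 2 = Th j k by rewrite Th_sym //; field.
apply: soft_lasso_kkt; rewrite ?dotv_self_ge0 //; last first.
- by apply: lasso_kkt_strong; rewrite // eq_sym.
- exact: corr2_eq0.
- by have := alpha_ge0 j; have := alpha_ge0 k; have := lam_gt0; lra.
Qed.

Lemma entry_soft_weak j k : ~~ sym -> k != j ->
  (Th j k + Th k j) / 2 =
    soft (dotv (colprod X j k) (resid_jk X y b0 bp bm Th j k))
         (lam + 2 * Num.min (alpha j) (alpha k))
    / dotv (colprod X j k) (colprod X j k).
Proof.
move=> hs kj; have aj := alpha_ge0 j; have ak := alpha_ge0 k.
rewrite addr_min2 dotv_resid_jk; last exact: Th_diag.
apply: soft_lasso_kkt; rewrite ?dotv_self_ge0 //.
- by have := lam_gt0; rewrite lt_min => lam0; apply/andP; split; lra.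
- exact: corr2_eq0.
have := lam_gt0 => lam0; apply: lasso_kkt_avg; [lra | lra | |].
- by apply: lasso_kkt_weak; rewrite // eq_sym.
- by rewrite -corr2C; apply: lasso_kkt_weak.
Qed.

End Solution.

Theorem mainTheorem1 (R : realType) (n p : nat) (X : 'M[R]_(n, p))
    (y : 'I_n -> R) (lam : R) :
  (forall j : 'I_p, \sum_i X i j ^+ 2 = 1) ->
  0 < lam ->
  (forall (b0 : R) (bp bm : 'I_p -> R) (Th : 'M[R]_p),
     strong_hl_solution X y lam b0 bp bm Th ->
     exists alpha : 'I_p -> R,
       (forall j, 0 <= alpha j) /\
       (forall j, rowl1 Th j < bp j + bm j -> alpha j = 0) /\
       (forall j, bp j - bm j =
          soft (dotv (fun i => X i j) (resid_j X y b0 bp bm Th j)) (lam - alpha j)) /\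
       (forall j k, k != j ->
          Th j k = soft (dotv (colprod X j k) (resid_jk X y b0 bp bm Th j k))
                        (lam + alpha j + alpha k)
                   / dotv (colprod X j k) (colprod X j k))) /\
  (forall (b0 : R) (bp bm : 'I_p -> R) (Th : 'M[R]_p),
     weak_hl_solution X y lam b0 bp bm Th ->
     exists alpha : 'I_p -> R,
       (forall j, 0 <= alpha j) /\
       (forall j, rowl1 Th j < bp j + bm j -> alpha j = 0) /\
       (forall j, bp j - bm j =
          soft (dotv (fun i => X i j) (resid_j X y b0 bp bm Th j)) (lam - alpha j)) /\
       (forall j k, k != j ->
          (Th j k + Th k j) / 2 =
            soft (dotv (colprod X j k) (resid_jk X y b0 bp bm Th j k))
                 (lam + 2 * Num.min (alpha j) (alpha k))
            / dotv (colprod X j k) (colprod X j k))).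
Proof.
move=> Xn1 lam_gt0; split=> b0 bp bm Th sol.
- exists (alpha X y lam b0 bp bm Th); split; [|split; [|split]].
  + exact: (alpha_ge0 (sym := true) lam_gt0 sol).
  + exact: (alpha_slack (sym := true) lam_gt0 sol).
  + by move=> j; apply: (beta_soft (sym := true) lam_gt0 sol).
  + by move=> j k; apply: (entry_soft_strong (sym := true) lam_gt0 sol).
- exists (alpha X y lam b0 bp bm Th); split; [|split; [|split]].
  + exact: (alpha_ge0 (sym := false) lam_gt0 sol).
  + exact: (alpha_slack (sym := false) lam_gt0 sol).
  + by move=> j; apply: (beta_soft (sym := false) lam_gt0 sol).
  + by move=> j k; apply: (entry_soft_weak (sym := false) lam_gt0 sol).
Qed.
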